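(* For $0 < s < 2$ define $T^{-1}(s) = \sqrt{1 - \frac{1}{4}s^2} - s$. Let $s_1^* = \sqrt{\frac{1}{3}(2+\sqrt{2})}$ and define \[\sigma = \sigma(s_1) = \begin{cases} \frac{1}{4}\left(-s_1 - 2T^{-1}(s_1) + \sqrt{8 - (s_1 - 2T^{-1}(s_1))^2}\right), & \text{if } s_1 \leq s_1^*,\\ \frac{1}{5}\left(\sqrt{20 - s_1^2} - 2s_1\right), & \text{otherwise.} \end{cases}\] Let $\ell_1 = \sqrt{1 - T^{-1}(s_1)^2} - \frac{s_1}{2}$. Define $x_{+1} = \frac{s_1}{2} + \frac{\sigma}{2\sqrt{2}}$, $x_{+2} = \frac{s_1}{2} + 0.645\sigma$, \[ y_{+1} = \begin{cases} T^{-1}(s_1) + \sigma + \frac{\sigma}{2\sqrt{2}}, &\text{if } s_1 \leq s_1^*,\\ \frac{\sigma}{2} + \frac{\sigma}{2\sqrt{2}}, &\text{otherwise,} \end{cases}\qquad y_{+2} = \begin{cases} T^{-1}(s_1) + 2 \cdot 0.645\sigma, &\text{if } s_1 \leq s_1^*,\\ -\frac{\sigma}{2} + 2 \cdot 0.645\sigma, &\text{otherwise,} \end{cases}\] and $F_{TP_1}(s_1) = x_{+1}^2 + y_{+1}^2$, $F_{TP_2}(s_1) = x_{+2}^2 + y_{+2}^2$. Then for all $s_1$ with $0.295 \leq s_1 \leq \sqrt{8/5}$ and $\ell_1 \leq s_1$, we have (1) $F_{TP_1}(s_1) \leq 1$ and (2) $F_{TP_2}(s_1) \leq 1$.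
   Context: Geometric meaning (not needed for the statement): $T^{-1}(s)$ is the highest possible $y$-coordinate of the bottom side of an axis-parallel square of side $s$ inside the unit disk centered at the origin; $\sigma(s_1)$ is the side length of the largest square fitting into the region of the disk to the left of such a topmost square of side $s_1$ and above the line through its bottom side; $\ell_1$ is the length of the bottom boundary of that region. *)

From Stdlib Require Import Reals.
Open Scope R_scope.

Definition Tinv (s : R) : R := sqrt (1 - / 4 * s ^ 2) - s.

Definition s1_star : R := sqrt (/ 3 * (2 + sqrt 2)).

Definition sigma (s1 : R) : R :=
  if Rle_dec s1 s1_star then
    / 4 * (- s1 - 2 * Tinv s1 + sqrt (8 - (s1 - 2 * Tinv s1) ^ 2))
  else / 5 * (sqrt (20 - s1 ^ 2) - 2 * s1).

Definition ell1 (s1 : R) : R := sqrt (1 - Tinv s1 ^ 2) - s1 / 2.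

Definition xp1 (s1 : R) : R := s1 / 2 + sigma s1 / (2 * sqrt 2).
Definition xp2 (s1 : R) : R := s1 / 2 + (645 / 1000) * sigma s1.

Definition yp1 (s1 : R) : R :=
  if Rle_dec s1 s1_star then Tinv s1 + sigma s1 + sigma s1 / (2 * sqrt 2)
  else sigma s1 / 2 + sigma s1 / (2 * sqrt 2).

Definition yp2 (s1 : R) : R :=
  if Rle_dec s1 s1_star then Tinv s1 + 2 * ((645 / 1000) * sigma s1)
  else - (sigma s1 / 2) + 2 * ((645 / 1000) * sigma s1).

Definition F_TP1 (s1 : R) : R := xp1 s1 ^ 2 + yp1 s1 ^ 2.
Definition F_TP2 (s1 : R) : R := xp2 s1 ^ 2 + yp2 s1 ^ 2.

From Pilot Require Import Defs.
From Stdlib Require Import Reals Lra Psatz.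
Open Scope R_scope.

(* Let a = sqrt (1 - s^2/4), so that (s/2, a) lies on the unit circle, and u = 3s - 2a; the
   hypothesis ell1 s <= s says exactly u >= 0.  For s <= s1_star the point (u, b) with
   b = sqrt (8 - u^2) lies on the circle of radius sqrt 8, and sigma = (s - 2a + b)/4.  Bounding b
   by a tangent line of that circle (Cauchy-Schwarz) makes both test points affine in (s/2, a),
   so F_TP is bounded by a convex quadratic in (s/2, a).  An arc of the unit circle lies in the
   triangle cut out by its chord and the tangents at its endpoints, and a convex function is at
   most 1 on a triangle as soon as it is at the vertices.  With rational endpoints this is a
   finite check: one arc suffices for F_TP1, two for F_TP2.  For s > s1_star the tangent to
   s^2 + c^2 = 20 at (2, 4) gives sigma <= 1 - s/2, and crude bounds suffice. *)

Lemma sqrt_le_of_le_sq x y : 0 <= y -> x <= y ^ 2 -> sqrt x <= y.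
Proof. intros Hy Hx. rewrite <- (sqrt_pow2 y Hy). now apply sqrt_le_1_alt. Qed.

Lemma le_sqrt_of_sq_le x y : 0 <= x -> x ^ 2 <= y -> x <= sqrt y.
Proof. intros Hx Hy. rewrite <- (sqrt_pow2 x Hx). now apply sqrt_le_1_alt. Qed.

Lemma sum_sq_shift_le x y c d t T :
  0 <= c -> 0 <= d -> t <= T -> 0 <= x + c * t -> 0 <= y + d * t ->
  (x + c * t) ^ 2 + (y + d * t) ^ 2 <= (x + c * T) ^ 2 + (y + d * T) ^ 2.
Proof.
  intros Hc Hd HtT Hx Hy.
  assert (0 <= c * (T - t)) by nra. assert (0 <= d * (T - t)) by nra.
  nra.
Qed.

Lemma sum_sq_le x y X Y :
  0 <= x <= X -> 0 <= y <= Y -> x ^ 2 + y ^ 2 <= X ^ 2 + Y ^ 2.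
Proof. intros. pose proof (pow_incr x X 2). pose proof (pow_incr y Y 2). lra. Qed.

Lemma circle_dot_le x y x0 y0 r :
  x ^ 2 + y ^ 2 = r -> x0 ^ 2 + y0 ^ 2 = r -> x * x0 + y * y0 <= r.
Proof. intros. pose proof (pow2_ge_0 (x - x0)). pose proof (pow2_ge_0 (y - y0)). nra. Qed.

Lemma arc_in_triangle x y x0 y0 x1 y1 r :
  x ^ 2 + y ^ 2 = r -> x0 ^ 2 + y0 ^ 2 = r -> x1 ^ 2 + y1 ^ 2 = r ->
  0 <= x0 <= x -> x <= x1 -> 0 <= y -> 0 <= y0 -> 0 <= y1 ->
  x * x0 + y * y0 <= r /\ x * x1 + y * y1 <= r /\
  r + (x0 * x1 + y0 * y1) <= x * (x0 + x1) + y * (y0 + y1).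
Proof.
  intros H H0 H1 Hx0 Hx1 Hy Hy0 Hy1.
  assert (y1 <= y <= y0) by (split; nra).
  split; [|split]; [exact (circle_dot_le _ _ _ _ _ H H0)
                  | exact (circle_dot_le _ _ _ _ _ H H1) | nra].
Qed.

Lemma sqrt2_bounds : 139 / 100 <= sqrt 2 <= 3 / 2.
Proof. split; [apply le_sqrt_of_sq_le | apply sqrt_le_of_le_sq]; lra. Qed.

Lemma inv_two_sqrt2_bounds : 0 <= / (2 * sqrt 2) <= 9 / 25.
Proof.
  pose proof sqrt2_bounds.
  assert (Hk : / (2 * sqrt 2) * (2 * sqrt 2) = 1) by (apply Rinv_l; lra).
  assert (0 < / (2 * sqrt 2)) by (apply Rinv_0_lt_compat; lra).
  split; nra.
Qed.

Lemma s1_star_bounds : 1 <= s1_star <= 120 / 109.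
Proof.
  pose proof sqrt2_bounds. unfold s1_star.
  split; [apply le_sqrt_of_sq_le | apply sqrt_le_of_le_sq]; lra.
Qed.

Definition corner_height (s : R) : R := sqrt (1 - / 4 * s ^ 2).

Lemma corner_on_circle s : -2 <= s <= 2 -> (s / 2) ^ 2 + corner_height s ^ 2 = 1.
Proof. intros. unfold corner_height. rewrite pow2_sqrt; nra. Qed.

Lemma corner_height_le_of_ell1_le s :
  0 < s <= 13 / 10 -> ell1 s <= s -> 2 * corner_height s <= 3 * s.
Proof.
  intros Hs Hell. unfold ell1, Tinv in Hell. fold (corner_height s) in Hell.
  pose proof (corner_on_circle s ltac:(lra)) as Hc.
  pose proof (sqrt_pos (1 - / 4 * s ^ 2)) as Ha. fold (corner_height s) in Ha.
  set (a := corner_height s) in *.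
  assert (Hd : 0 <= 1 - (a - s) ^ 2) by nra.
  pose proof (pow2_sqrt _ Hd). pose proof (sqrt_pos (1 - (a - s) ^ 2)).
  assert (1 - (a - s) ^ 2 <= (3 * s / 2) ^ 2) by nra.
  (* on the circle, 1 - (a - s)^2 - (3s/2)^2 = s (2a - 3s) *)
  nra.
Qed.

Section SmallSquare.

Variable s : R.
Hypothesis s_pos : 0 < s.
Hypothesis s_le_star : s <= s1_star.
Hypothesis ell1_le : ell1 s <= s.

Let a := corner_height s.
Let u := 3 * s - 2 * a.
Let b := sqrt (8 - u ^ 2).
Let sg := (s - 2 * a + b) / 4.

Lemma small_on_circle : (s / 2) ^ 2 + a ^ 2 = 1.
Proof. pose proof s1_star_bounds. apply corner_on_circle; lra. Qed.

Lemma small_u_nonneg : 0 <= u.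
Proof.
  pose proof s1_star_bounds.
  pose proof (corner_height_le_of_ell1_le s ltac:(lra) ell1_le).
  unfold u, a; lra.
Qed.

Lemma small_s_bounds : 888 / 1405 <= s <= 120 / 109.
Proof.
  pose proof s1_star_bounds. pose proof small_on_circle. pose proof small_u_nonneg.
  assert (0 <= a) by apply sqrt_pos.
  unfold u in *; split; nra.
Qed.

Lemma small_a_bounds : 91 / 109 <= a <= 1333 / 1405.
Proof.
  pose proof small_on_circle. pose proof small_s_bounds.
  assert (0 <= a) by apply sqrt_pos.
  split; nra.
Qed.

Lemma small_b_on_circle : u ^ 2 + b ^ 2 = 8.
Proof.
  pose proof small_u_nonneg. pose proof small_s_bounds. pose proof small_a_bounds.
  unfold b. rewrite pow2_sqrt; unfold u in *; nra.
Qed.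

Lemma small_sigma_ge : (s - 2 * a + 23 / 10) / 4 <= sg.
Proof.
  pose proof small_b_on_circle. pose proof small_u_nonneg.
  pose proof small_s_bounds. pose proof small_a_bounds.
  assert (u <= 164 / 100) by (unfold u; lra).
  assert (0 <= b) by apply sqrt_pos.
  assert (23 / 10 <= b) by nra.
  unfold sg; lra.
Qed.

Lemma small_sigma_le um q :
  um ^ 2 + q ^ 2 = 8 -> 0 < q -> sg <= (s - 2 * a + (8 - u * um) / q) / 4.
Proof.
  intros Hum Hq.
  pose proof (circle_dot_le _ _ _ _ _ small_b_on_circle Hum).
  assert (b <= (8 - u * um) / q) by (apply Rmult_le_reg_r with q; [lra | field_simplify; lra]).
  unfold sg; lra.
Qed.

(* The arcs end at the rational points (2t, 1 - t^2) / (1 + t^2) of the unit circle for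
   t = 6/37, 2/9, 3/10; t = 6/37 lies just below sqrt 10 - 3, the value of t at which u = 0. *)
Lemma small_TP1_le k :
  0 <= k <= 9 / 25 -> (s / 2 + k * sg) ^ 2 + (a - s + (1 + k) * sg) ^ 2 <= 1.
Proof.
  intros Hk.
  pose proof small_on_circle. pose proof small_u_nonneg.
  pose proof small_s_bounds. pose proof small_a_bounds.
  pose proof small_sigma_ge.
  pose proof (small_sigma_le (2 / 29) (82 / 29) ltac:(lra) ltac:(lra)).
  set (S := (s - 2 * a + (8 - u * (2 / 29)) / (82 / 29)) / 4) in *.
  assert (0 <= a - s + sg) by lra.
  apply Rle_trans with ((s / 2 + k * S) ^ 2 + (a - s + (1 + k) * S) ^ 2).
  { apply sum_sq_shift_le; nra. }
  apply Rle_trans with ((s / 2 + S * (9 / 25)) ^ 2 + (a - s + S + S * (9 / 25)) ^ 2).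
  { replace (k * S) with (S * k) by ring.
    replace (a - s + (1 + k) * S) with (a - s + S + S * k) by ring.
    apply sum_sq_shift_le; nra. }
  destruct (arc_in_triangle (s / 2) a (444 / 1405) (1333 / 1405) (60 / 109) (91 / 109) 1)
    as (Htan0 & Htan1 & Hchord); try lra.
  unfold S, u; nra.
Qed.

Lemma small_TP2_le :
  (s / 2 + 645 / 1000 * sg) ^ 2 + (a - s + 1290 / 1000 * sg) ^ 2 <= 1.
Proof.
  pose proof small_on_circle. pose proof small_u_nonneg.
  pose proof small_s_bounds. pose proof small_a_bounds.
  pose proof small_sigma_ge.
  destruct (Rle_dec s (72 / 85)).
  - pose proof (small_sigma_le (2 / 29) (82 / 29) ltac:(lra) ltac:(lra)).
    set (S := (s - 2 * a + (8 - u * (2 / 29)) / (82 / 29)) / 4) in *.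
    apply Rle_trans with ((s / 2 + 645 / 1000 * S) ^ 2 + (a - s + 1290 / 1000 * S) ^ 2).
    { apply sum_sq_shift_le; lra. }
    destruct (arc_in_triangle (s / 2) a (444 / 1405) (1333 / 1405) (36 / 85) (77 / 85) 1)
      as (Htan0 & Htan1 & Hchord); try lra.
    unfold S, u; nra.
  - pose proof (small_sigma_le (2 / 5) (14 / 5) ltac:(lra) ltac:(lra)).
    set (S := (s - 2 * a + (8 - u * (2 / 5)) / (14 / 5)) / 4) in *.
    apply Rle_trans with ((s / 2 + 645 / 1000 * S) ^ 2 + (a - s + 1290 / 1000 * S) ^ 2).
    { apply sum_sq_shift_le; lra. }
    destruct (arc_in_triangle (s / 2) a (36 / 85) (77 / 85) (60 / 109) (91 / 109) 1)
      as (Htan0 & Htan1 & Hchord); try lra.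
    unfold S, u; nra.
Qed.

Lemma small_sigma_eq : Defs.sigma s = sg.
Proof.
  unfold Defs.sigma, Tinv. destruct (Rle_dec s s1_star) as [_ | ]; [|contradiction].
  change (sqrt (1 - / 4 * s ^ 2)) with a.
  replace (s - 2 * (a - s)) with u by (unfold u; ring).
  unfold sg, b. field.
Qed.

Lemma small_F_TP_le : F_TP1 s <= 1 /\ F_TP2 s <= 1.
Proof.
  unfold F_TP1, F_TP2, xp1, xp2, yp1, yp2, Tinv.
  destruct (Rle_dec s s1_star) as [_ | ]; [|contradiction].
  rewrite small_sigma_eq. change (sqrt (1 - / 4 * s ^ 2)) with a.
  split.
  - replace (sg / (2 * sqrt 2)) with (/ (2 * sqrt 2) * sg) by (unfold Rdiv; ring).
    replace (a - s + sg + / (2 * sqrt 2) * sg) with (a - s + (1 + / (2 * sqrt 2)) * sg) by ring.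
    exact (small_TP1_le _ inv_two_sqrt2_bounds).
  - replace (a - s + 2 * (645 / 1000 * sg)) with (a - s + 1290 / 1000 * sg) by lra.
    exact small_TP2_le.
Qed.

End SmallSquare.

Section LargeSquare.

Variable s : R.
Hypothesis s_gt_star : s1_star < s.
Hypothesis s_le : s <= 1265 / 1000.

Let c := sqrt (20 - s ^ 2).
Let sg := (c - 2 * s) / 5.

Lemma large_sigma_bounds : 0 <= sg <= 1 - s / 2.
Proof.
  pose proof s1_star_bounds.
  assert (Hc : s ^ 2 + c ^ 2 = 20) by (unfold c; rewrite pow2_sqrt; nra).
  assert (0 <= c) by apply sqrt_pos.
  pose proof (circle_dot_le _ _ 2 4 _ Hc ltac:(lra)).
  assert (2 * s <= c) by nra.
  unfold sg; lra.
Qed.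

Lemma large_sigma_eq : Defs.sigma s = sg.
Proof.
  unfold Defs.sigma. destruct (Rle_dec s s1_star); [lra|].
  unfold sg, c. field.
Qed.

Lemma large_F_TP_le : F_TP1 s <= 1 /\ F_TP2 s <= 1.
Proof.
  unfold F_TP1, F_TP2, xp1, xp2, yp1, yp2.
  destruct (Rle_dec s s1_star); [lra|].
  rewrite large_sigma_eq.
  pose proof large_sigma_bounds. pose proof s1_star_bounds.
  pose proof inv_two_sqrt2_bounds. unfold Rdiv.
  set (k := / (2 * sqrt 2)) in *.
  split.
  - apply Rle_trans with ((77 / 100) ^ 2 + (43 / 100) ^ 2); [|lra].
    apply sum_sq_le; split; nra.
  - apply Rle_trans with ((87 / 100) ^ 2 + (2 / 5) ^ 2); [|lra].
    apply sum_sq_le; split; nra.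
Qed.

End LargeSquare.

Theorem lemma6 (s1 : R) :
  295 / 1000 <= s1 -> s1 <= sqrt (8 / 5) -> ell1 s1 <= s1 ->
  F_TP1 s1 <= 1 /\ F_TP2 s1 <= 1.
Proof.
  intros Hlo Hhi Hell.
  assert (s1 <= 1265 / 1000).
  { apply Rle_trans with (1 := Hhi). apply sqrt_le_of_le_sq; lra. }
  destruct (Rle_dec s1 s1_star).
  - apply small_F_TP_le; lra.
  - apply large_F_TP_le; lra.
Qed.
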